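(* Let $V$ be a finite-dimensional braided vector space of diagonal type over a field $F$ of characteristic zero and $\mathfrak B(V)$ its Nichols algebra. If $\Delta(\mathfrak B(V))$ is not an arithmetic root system (i.e. is infinite), then $\dim\mathfrak L(V)_L=\infty$ and $\dim\mathfrak L(V)_R=\infty$.
   Context: $V$ has basis $x_1<\dots<x_n$, braiding $C(x_i\otimes x_j)=p_{i,j}x_j\otimes x_i$; $\mathfrak B(V)=T(V)/\bigoplus_{m\ge2}\ker S_m$ is $\mathbb Z^n$-graded by $\deg x_i=e_i$. Words are ordered lexicographically; a word $u$ is Lyndon if $|u|=1$ or $u<u_2u_1$ for every factorization $u=u_1u_2$ into nonempty words. A word is standard with respect to $\mathfrak B(V)$ if in $\mathfrak B(V)$ it is not a linear combination of strictly greater words (of the same degree). $\Delta^+(\mathfrak B(V))$ is the set of degrees of words that are both Lyndon and standard (equivalently, degrees of Kharchenko's hard super-letters), $\Delta(\mathfrak B(V))=\Delta^+\cup(-\Delta^+)$; it is an arithmetic root system if it is finite. With $p_{u,v}=\prod p_{i,j}^{a_ib_j}$ for $\deg u=\sum a_ie_i,\deg v=\sum b_je_j$, $\mathfrak L(V)_L$ (resp. $\mathfrak L(V)_R$) is the Lie subalgebra of $\mathfrak B(V)$ generated by $V$ under $[u,v]_L=p_{v,u}uv-p_{u,v}vu$ (resp. $[u,v]_R=p_{u,v}uv-p_{v,u}vu$). *)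

(* Nichols algebras of diagonal type, modelled inside the
   tensor algebra T(V) (finite formal sums of words), modulo the ideal
   I = (+)_{m>=2} ker S_m. *)
From HB Require Import structures.
From mathcomp Require Import all_boot all_order all_algebra all_fingroup.
Set Implicit Arguments. Unset Strict Implicit. Unset Printing Implicit Defensive.
Import GRing.Theory.
Local Open Scope ring_scope.

Section Nichols.
Variables (F : fieldType) (n : nat) (p : 'I_n -> 'I_n -> F).

(* words in the letters x_1 < ... < x_n (letter i stands for x_(i+1)) *)
Definition word := seq 'I_n.
(* an element of T(V): a finite formal linear combination of words *)
Definition tens := seq (F * word).

Definition coef (u : tens) (w : word) : F :=
  \sum_(t <- u) (if t.2 == w then t.1 else 0).
Definition tzero (u : tens) : Prop := forall w, coef u w = 0.
Definition tscale (c : F) (u : tens) : tens := [seq (c * t.1, t.2) | t <- u].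
Definition tsub (u v : tens) : tens := u ++ tscale (-1) v.
Definition tmul (u v : tens) : tens :=
  [seq (a.1 * b.1, a.2 ++ b.2) | a <- u, b <- v].
Definition tword (w : word) : tens := [:: (1, w)].

(* the lift T_s of s in S_m to the braid group, acting on a word of length m:
   the letter in position a moves to position s a; every pair of letters
   (x_i left of x_j) which gets crossed contributes the factor p_(i,j). *)
Definition permw (w : word) (s : 'S_(size w)) : word :=
  [seq tnth (in_tuple w) ((s^-1)%g j) | j <- enum 'I_(size w)].
Definition braid_coef (w : word) (s : 'S_(size w)) : F :=
  \prod_(a : 'I_(size w))
    \prod_(b : 'I_(size w) | (a < b)%N && (s b < s a)%N)
      p (tnth (in_tuple w) a) (tnth (in_tuple w) b).
(* quantum symmetrizer S_m = sum_{s in S_m} T_s applied to a word of length m *)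
Definition symw (w : word) : tens :=
  [seq (braid_coef s, permw s) | s : 'S_(size w)].
Definition sym (u : tens) : tens := flatten [seq tscale t.1 (symw t.2) | t <- u].
Definition comp (m : nat) (u : tens) : tens := [seq t <- u | size t.2 == m].
(* u lies in the ideal (+)_{m >= 2} ker S_m *)
Definition inI (u : tens) : Prop :=
  forall m, if (m < 2)%N then tzero (comp m u) else tzero (sym (comp m u)).

Definition wdeg (w : word) : {ffun 'I_n -> nat} := [ffun i => count_mem i w].

Fixpoint lexlt (u v : word) : bool :=
  match u, v with
  | [::], [::] => false
  | [::], _ :: _ => true
  | _ :: _, [::] => false
  | a :: u', b :: v' => (a < b)%N || ((a == b) && lexlt u' v')
  end.

Definition lyndon (w : word) : Prop :=
  w != [::] /\
  (size w = 1%N \/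
   forall u1 u2, u1 != [::] -> u2 != [::] -> w = u1 ++ u2 -> lexlt w (u2 ++ u1)).

Definition standard (w : word) : Prop :=
  ~ exists l : seq (F * word),
      all (fun t => lexlt w t.2 && (wdeg t.2 == wdeg w)) l /\
      inI (tsub (tword w) l).

Definition DeltaPlus (d : {ffun 'I_n -> int}) : Prop :=
  exists w, [/\ lyndon w, standard w & d = [ffun i => (wdeg w i)%:Z]].
Definition Delta (d : {ffun 'I_n -> int}) : Prop :=
  DeltaPlus d \/ DeltaPlus [ffun i => - d i].
Definition Delta_finite : Prop :=
  exists s : seq {ffun 'I_n -> int}, forall d, Delta d -> d \in s.

Definition pdeg (d e : {ffun 'I_n -> nat}) : F :=
  \prod_(i : 'I_n) \prod_(j : 'I_n) p i j ^+ (d i * e j).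

(* iterated brackets of generators *)
Inductive btree := BLeaf of 'I_n | BNode of btree & btree.
Fixpoint bdeg (t : btree) : {ffun 'I_n -> nat} :=
  match t with
  | BLeaf i => wdeg [:: i]
  | BNode a b => [ffun i => (bdeg a i + bdeg b i)%N]
  end.
Fixpoint bevalL (t : btree) : tens :=
  match t with
  | BLeaf i => tword [:: i]
  | BNode a b =>
      tsub (tscale (pdeg (bdeg b) (bdeg a)) (tmul (bevalL a) (bevalL b)))
           (tscale (pdeg (bdeg a) (bdeg b)) (tmul (bevalL b) (bevalL a)))
  end.
Fixpoint bevalR (t : btree) : tens :=
  match t with
  | BLeaf i => tword [:: i]
  | BNode a b =>
      tsub (tscale (pdeg (bdeg a) (bdeg b)) (tmul (bevalR a) (bevalR b)))
           (tscale (pdeg (bdeg b) (bdeg a)) (tmul (bevalR b) (bevalR a)))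
  end.

Definition lincomb (ev : btree -> tens) (l : seq (F * btree)) : tens :=
  flatten [seq tscale t.1 (ev t.2) | t <- l].
(* u represents (in B(V)) an element of the Lie subalgebra generated by V,
   i.e. of the span of the iterated brackets of generators *)
Definition inLie (ev : btree -> tens) (u : tens) : Prop :=
  exists l : seq (F * btree), inI (tsub u (lincomb ev l)).
(* the Lie subalgebra is infinite dimensional: it contains N elements
   linearly independent in B(V), for every N *)
Definition lie_infinite_dim (ev : btree -> tens) : Prop :=
  forall N : nat, exists us : 'I_N -> tens,
    (forall k, inLie ev (us k)) /\
    (forall c : 'I_N -> F,
        inI (flatten [seq tscale (c k) (us k) | k <- enum 'I_N]) ->
        forall k, c k = 0).

End Nichols.

From Pilot Require Import Defs.
From mathcomp Require Import all_boot all_order all_algebra all_fingroup.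
From Stdlib Require Import Classical.
Set Implicit Arguments. Unset Strict Implicit. Unset Printing Implicit Defensive.
Import Order.TTheory GRing.Theory.

(* Standard Lyndon words occur in infinitely many degrees, hence (there being
   finitely many degrees of each length) in unbounded lengths.  Bracketing a
   Lyndon word w along its standard factorization w = uv, with v the least
   proper suffix, gives an iterated bracket, for [_,_]_L as well as for
   [_,_]_R, whose words are anagrams of w lexicographically at least w, and in
   which w itself has a nonzero coefficient, because u and v are Lyndon and
   uv < vu.  If this bracket vanished in B(V), w would be a combination of
   greater words, so it would not be standard.  The brackets obtained are
   homogeneous of pairwise distinct lengths and nonzero in B(V); as the
   defining ideal is graded by length, they are linearly independent. *)

Lemma size_lt_catl (T : eqType) (r s : seq T) : r != [::] -> size s < size (r ++ s).
Proof. by case: r => //= a r _; rewrite size_cat ltnS leq_addl. Qed.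

Lemma size_lt_catr (T : eqType) (r s : seq T) : s != [::] -> size r < size (r ++ s).
Proof. by rewrite size_cat -{1}[size r]addn0 ltn_add2l lt0n size_eq0. Qed.

Section Lexicographic.
Variable n : nat.
Implicit Types u v w x y : word n.

Lemma lexltE u v : lexlt u v = (u < v :> seqlexi 'I_n)%O.
Proof.
elim: u v => [|a u IH] [|b v] //=.
rewrite ltxi_cons IH !leEord -val_eqE.
by case: (ltngtP a b) => // [/gtn_eqF -> | ->]; rewrite ?eqxx.
Qed.

Lemma lexlt_irr u : lexlt u u = false.
Proof. by rewrite lexltE ltxx. Qed.

Lemma lexlt_trans v u w : lexlt u v -> lexlt v w -> lexlt u w.
Proof. by rewrite !lexltE; apply: lt_trans. Qed.

Lemma lexlt_asym u v : lexlt u v -> lexlt v u = false.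
Proof. by rewrite !lexltE => /lt_gtF. Qed.

Lemma lexlt_total u v : u != v -> lexlt u v || lexlt v u.
Proof. by rewrite !lexltE; apply: (@lt_total _ (seqlexi 'I_n)). Qed.

Lemma lexlt_catl w u v : lexlt (w ++ u) (w ++ v) = lexlt u v.
Proof. by elim: w => //= a w ->; rewrite ltnn eqxx. Qed.

Lemma lexlt_prefix_or_cat u v : lexlt u v ->
  (exists2 z, z != [::] & v = u ++ z) \/ (forall x y, lexlt (u ++ x) (v ++ y)).
Proof.
elim: u v => [|a u IH] [|b v] //= => [_ | ]; first by left; exists (b :: v).
case/orP=> [ab | /andP[/eqP <- /IH [[z z0 ->] | uv]]].
- by right=> x y; rewrite ab.
- by left; exists z.
- by right=> x y; rewrite ltnn eqxx uv.
Qed.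

Lemma lexlt_cat_eqsize u v x y : size u = size v ->
  lexlt u v -> lexlt (u ++ x) (v ++ y).
Proof.
move=> suv /lexlt_prefix_or_cat [[z z0 vuz]|//].
by have := size_lt_catr u z0; rewrite -vuz suv ltnn.
Qed.

Lemma lexle_cat_eqsize u v x y : size u = size v ->
  lexlt (u ++ x) (v ++ y) -> (u == v) || lexlt u v.
Proof.
move=> suv uxvy; case: eqVneq => //= /lexlt_total /orP[//|vu].
by have := lexlt_cat_eqsize y x (esym suv) vu; rewrite (lexlt_asym uxvy).
Qed.

End Lexicographic.

Section Lyndon.
Variable n : nat.
Implicit Types u v w r s t : word n.

Definition suffix_minimal w :=
  w != [::] /\ forall r s, r != [::] -> s != [::] -> w = r ++ s -> lexlt w s.

Lemma lyndon_suffix_minimal w : lyndon w -> suffix_minimal w.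
Proof.
case=> w0 lyn; split=> // r s r0 s0 wrs.
have rot u1 u2 : u1 != [::] -> u2 != [::] -> w = u1 ++ u2 -> lexlt w (u2 ++ u1).
  case: lyn => [w1 u10 u20 e|]; last exact.
  by have := size_lt_catl u2 u10; rewrite -e w1 ltnS leqn0 size_eq0 (negPf u20).
have ws : w != s by apply/eqP=> ews; have := size_lt_catl s r0; rewrite -wrs ews ltnn.
case/orP: (lexlt_total ws) => // sw.
have wsr := rot _ _ r0 s0 wrs.
case: (lexlt_prefix_or_cat sw) => [[z z0 wsz]|]; last first.
  by move=> /(_ r [::]); rewrite cats0 (lexlt_asym wsr).
have szr : size r = size z.
  by have := congr1 size wsz; rewrite wrs !size_cat addnC => /addnI.
move: (rot _ _ s0 z0 wsz); rewrite {1}wrs => /(lexle_cat_eqsize szr) /orP[/eqP rz|rz].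
  by move: wsr; rewrite wsz rz lexlt_irr.
by move: wsr; rewrite wsz lexlt_catl (lexlt_asym rz).
Qed.

Lemma suffix_minimal_lt_rot w r s : suffix_minimal w ->
  r != [::] -> s != [::] -> w = r ++ s -> lexlt w (s ++ r).
Proof.
case=> _ wmin r0 s0 wrs; have := wmin _ _ r0 s0 wrs.
case/lexlt_prefix_or_cat => [[z z0 swz]|/(_ [::] r)]; last by rewrite cats0.
by have := size_lt_catl s r0; rewrite -wrs swz size_cat ltnNge leq_addr.
Qed.

Lemma suffix_minimal_factor w : suffix_minimal w -> 1 < size w ->
  exists u v, [/\ w = u ++ v, suffix_minimal u & suffix_minimal v].
Proof.
case=> w0 wmin w2.
(* v is the least proper suffix of w; this is the standard factorization. *)
have [k k0 kmin] := @arg_minP _ (seqlexi 'I_n) _ (Ordinal w2) (fun k => 0 < k)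
  (fun k => drop k w : seqlexi 'I_n) isT.
set v := drop k w in kmin; set u := take k w.
have wuv : w = u ++ v by rewrite cat_take_drop.
have vmin r s : r != [::] -> s != [::] -> w = r ++ s -> (v == s) || lexlt v s.
  move=> r0 s0 wrs; have rw : size r < size w by rewrite wrs size_lt_catr.
  have := kmin (Ordinal rw); rewrite /= lt0n size_eq0 r0 wrs drop_size_cat //.
  by rewrite le_eqVlt lexltE; apply.
have u0 : u != [::] by rewrite -size_eq0 size_take ltn_ord -lt0n.
have v0 : v != [::] by rewrite -size_eq0 size_drop subn_eq0 -ltnNge ltn_ord.
clearbody u v; clear kmin; exists u, v; split=> //; split=> // r s r0 s0.
- move=> urs; have ws : lexlt w (s ++ v).
    by apply: (wmin r) => //; [case: (s) s0 | rewrite wuv urs catA].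
  have us : u != s by apply/eqP=> e; have := size_lt_catl s r0; rewrite -urs e ltnn.
  case/orP: (lexlt_total us) => // su.
  case: (lexlt_prefix_or_cat su) => [[t t0 ust] | /(_ v v)]; last first.
    by rewrite -wuv (lexlt_asym ws).
  move: ws; rewrite wuv ust -catA lexlt_catl => /lexlt_asym tvv.
  have tv0 : t ++ v != [::] by case: (t) t0.
  have wstv : w = s ++ (t ++ v) by rewrite wuv ust catA.
  have := vmin _ _ s0 tv0 wstv.
  by rewrite tvv orbF => /eqP e; have := size_lt_catl v t0; rewrite -e ltnn.
- move=> vrs; have ur0 : u ++ r != [::] by case: (u) u0.
  have wurs : w = (u ++ r) ++ s by rewrite wuv vrs catA.
  have := vmin _ _ ur0 s0 wurs.
  by case/orP=> [/eqP vs|//]; have := size_lt_catl s r0; rewrite -vrs vs ltnn.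
Qed.

End Lyndon.

Local Open Scope ring_scope.

Section Coefficients.
Variables (F : fieldType) (n : nat).
Local Notation word := (word n).
Local Notation tens := (tens F n).
Implicit Types (u v A B : tens) (w x a b : word).

Lemma coef_cat u v x : coef (u ++ v) x = coef u x + coef v x.
Proof. by rewrite /coef big_cat. Qed.

Lemma coef_nil x : coef ([::] : tens) x = 0.
Proof. by rewrite /coef big_nil. Qed.

Lemma coef_tscale c u x : coef (tscale c u) x = c * coef u x.
Proof.
rewrite /coef big_map mulr_sumr; apply: eq_bigr => t _ /=.
by case: eqP; rewrite ?mulr0.
Qed.

Lemma coef_tsub u v x : coef (tsub u v) x = coef u x - coef v x.
Proof. by rewrite coef_cat coef_tscale mulN1r. Qed.

Lemma coef_tword w x : coef (tword F w) x = (w == x)%:R.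
Proof. by rewrite /coef big_seq1 /=; case: eqP. Qed.

Lemma coef_flatten (l : seq tens) x : coef (flatten l) x = \sum_(u <- l) coef u x.
Proof. by rewrite /coef big_flatten. Qed.

Lemma coef_notin u x : all (fun t => t.2 != x) u -> coef u x = 0.
Proof. by move/allP=> ux; rewrite /coef big1_seq // => t /andP[_ /ux /negPf ->]. Qed.

Lemma coef_comp m u x : coef (Defs.comp m u) x = if size x == m then coef u x else 0.
Proof.
rewrite /coef big_filter; case: ifP => xm.
  rewrite big_mkcond; apply: eq_bigr => t _.
  by case: (eqVneq t.2 x) => [->|]; rewrite ?xm //; case: ifP.
by rewrite big1 // => t tm; case: eqP => // tx; rewrite -tx tm in xm.
Qed.

Definition homogeneous m u := all (fun t => size t.2 == m) u.

Lemma coef_homogeneous m u x : homogeneous m u -> size x != m -> coef u x = 0.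
Proof.
move=> /allP hu xm; apply/coef_notin/allP => t /hu /eqP tm.
by apply: contraNneq xm => <-; rewrite tm.
Qed.

Lemma coef_tmul_cat A B a b : homogeneous (size a) A ->
  coef (tmul A B) (a ++ b) = coef A a * coef B b.
Proof.
move=> /allP hA; rewrite /coef big_allpairs_dep /= mulr_suml.
apply: eq_big_seq => s sA; rewrite mulr_sumr; apply: eq_bigr => t _ /=.
rewrite eqseq_cat; last exact/eqP/hA.
by case: eqP => _; case: eqP => _; rewrite ?mulr0 ?mul0r.
Qed.

Lemma sum_terms_coef u (s : seq word) (f : word -> F) : uniq s ->
  {subset [seq t.2 | t <- u] <= s} ->
  \sum_(t <- u) t.1 * f t.2 = \sum_(y <- s) coef u y * f y.
Proof.
move=> us sub; under [RHS]eq_bigr do rewrite /coef mulr_suml.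
rewrite exchange_big /=; apply: eq_big_seq => t tu.
rewrite (bigD1_seq t.2) ?sub ?map_f //= eqxx big1 ?addr0 // => y ty.
by rewrite eq_sym (negPf ty) mul0r.
Qed.

End Coefficients.

Section Ideal.
Variables (F : fieldType) (n : nat) (p : 'I_n -> 'I_n -> F).
Local Notation tens := (tens F n).
Implicit Types u v : tens.

Lemma coef_sym u x : coef (sym p u) x = \sum_(t <- u) t.1 * coef (symw p t.2) x.
Proof. by rewrite coef_flatten big_map; apply: eq_bigr => t _; rewrite coef_tscale. Qed.

Lemma coef_sym_scale u v c : (forall x, coef v x = c * coef u x) ->
  forall x, coef (sym p v) x = c * coef (sym p u) x.
Proof.
move=> uv x; set s := undup [seq t.2 | t <- u ++ v].
have [su sv] : {subset [seq t.2 | t <- u] <= s} /\ {subset [seq t.2 | t <- v] <= s}.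
  by split=> y y_in; rewrite mem_undup map_cat mem_cat y_in ?orbT.
rewrite !coef_sym !(@sum_terms_coef _ _ _ s (fun y => coef (symw p y) x)) ?undup_uniq //.
by rewrite mulr_sumr; apply: eq_bigr => y _; rewrite uv mulrA.
Qed.

Lemma inI_coef_scale u v c : (forall x, coef v x = c * coef u x) ->
  inI p u -> inI p v.
Proof.
move=> uv hu m; have := hu m.
have uvm x : coef (Defs.comp m v) x = c * coef (Defs.comp m u) x.
  by rewrite !coef_comp uv; case: ifP; rewrite ?mulr0.
case: ifP => _ hum x; first by rewrite uvm hum mulr0.
by rewrite (coef_sym_scale uvm) hum mulr0.
Qed.

Lemma inI_nil : inI p ([::] : tens).
Proof. by move=> m; case: ifP => _ x; rewrite coef_nil. Qed.

Lemma comp_comp k m u :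
  Defs.comp k (Defs.comp m u) = if k == m then Defs.comp m u else [::].
Proof.
rewrite /Defs.comp -filter_predI; case: eqP => [-> | km].
  by apply: eq_filter => t /=; rewrite andbb.
by rewrite -(filter_pred0 u); apply: eq_filter => t /=; apply/andP => -[/eqP-> /eqP].
Qed.

Lemma inI_comp m u : inI p u -> inI p (Defs.comp m u).
Proof.
by move=> hu k; rewrite comp_comp; case: eqP => [-> | _]; [apply: hu | apply: inI_nil].
Qed.

End Ideal.

Section LeadingWord.
Variables (F : fieldType) (n : nat).
Local Notation word := (word n).
Local Notation tens := (tens F n).
Implicit Types (u E A B : tens) (w x y a b : word).

Definition anagram_ge w x := perm_eq x w && ((x == w) || lexlt w x).

Definition leading_word E w := all (fun t => anagram_ge w t.2) E /\ coef E w != 0.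

Lemma wdeg_perm x y : perm_eq x y -> wdeg x = wdeg y.
Proof. by move/seq.permP=> xy; apply/ffunP=> i; rewrite !ffunE xy. Qed.

Lemma leading_word_homogeneous E w : leading_word E w -> homogeneous (size w) E.
Proof. by case=> /allP hE _; apply/allP=> t /hE /andP[/perm_size ->]. Qed.

Lemma leading_word_tword w : leading_word (tword F w) w.
Proof. by rewrite /leading_word coef_tword /= /anagram_ge perm_refl eqxx oner_neq0. Qed.

Lemma coef_filter_word u w x :
  coef [seq t <- u | t.2 != w] x = if x == w then 0 else coef u x.
Proof.
rewrite /coef big_filter; case: eqP => [-> | /eqP xw].
  by rewrite big1 // => t /negPf ->.
rewrite big_mkcond; apply: eq_bigr => t _.
by case: (eqVneq t.2 x) => [-> | _]; rewrite ?xw //; case: ifP.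
Qed.

Lemma anagram_ge_cat a b x y :
  anagram_ge a x -> anagram_ge b y -> anagram_ge (a ++ b) (x ++ y).
Proof.
case/andP=> xa /orP[/eqP-> | ax] /andP[yb yby]; rewrite /anagram_ge perm_cat //=.
  by case/orP: yby => [/eqP-> | lt_by]; rewrite ?eqxx // lexlt_catl lt_by orbT.
by rewrite lexlt_cat_eqsize ?orbT // (perm_size xa).
Qed.

Lemma all_anagram_ge_tmul A B a b :
  all (fun t => anagram_ge a t.2) A -> all (fun t => anagram_ge b t.2) B ->
  all (fun t => anagram_ge (a ++ b) t.2) (tmul A B).
Proof.
move=> /allP hA /allP hB; apply/allP => _ /allpairsP[[s t] [sA tB ->]] /=.
exact: anagram_ge_cat (hA _ sA) (hB _ tB).
Qed.

Lemma leading_word_bracket A B a b c1 c2 :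
  leading_word A a -> leading_word B b -> lexlt (a ++ b) (b ++ a) -> c1 != 0 ->
  leading_word (tsub (tscale c1 (tmul A B)) (tscale c2 (tmul B A))) (a ++ b).
Proof.
move=> [hA cA] [hB cB] ab_ba c10.
have BA : all (fun t => perm_eq t.2 (a ++ b) && lexlt (a ++ b) t.2) (tmul B A).
  apply/allP => t /(allP (all_anagram_ge_tmul hB hA)) /andP[tba ge_t].
  rewrite perm_sym perm_catC perm_sym tba /=.
  by case/orP: ge_t => [/eqP-> // | /(lexlt_trans ab_ba)].
split.
  rewrite /tsub /tscale all_cat !all_map (all_anagram_ge_tmul hA hB) /=.
  by apply/allP => t /(allP BA) /andP[tab lt_t]; rewrite /= /anagram_ge tab lt_t orbT.
rewrite coef_tsub !coef_tscale coef_tmul_cat ?(leading_word_homogeneous (conj hA cA)) //.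
rewrite [coef (tmul B A) _]coef_notin ?mulr0 ?subr0 ?mulf_neq0 //.
by apply/allP => t /(allP BA) /andP[_]; apply: contraTneq => ->; rewrite lexlt_irr.
Qed.

Lemma leading_word_notinI (p : 'I_n -> 'I_n -> F) E w :
  leading_word E w -> standard p w -> ~ inI p E.
Proof.
move=> [hE cE] sw IE; apply: sw.
exists (tscale (- (coef E w)^-1) [seq t <- E | t.2 != w]); split.
  rewrite all_map; apply/allP => t; rewrite mem_filter => /andP[tw /(allP hE)] /=.
  case/andP=> /wdeg_perm -> /orP[/eqP tw' | ->]; last by rewrite eqxx.
  by rewrite tw' eqxx in tw.
apply: (inI_coef_scale (c := (coef E w)^-1)) IE => x.
rewrite coef_tsub coef_tword coef_tscale coef_filter_word eq_sym.
by case: eqP => [-> | _]; rewrite ?mulr0 ?subr0 ?mulVf // sub0r mulNr opprK.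
Qed.

End LeadingWord.

Lemma homogeneous_free (F : fieldType) n (p : 'I_n -> 'I_n -> F) N
    (us : 'I_N -> tens F n) (ms : 'I_N -> nat) :
  injective ms -> (forall k, homogeneous (ms k) (us k)) ->
  (forall k, ~ inI p (us k)) ->
  forall c : 'I_N -> F,
    inI p (flatten [seq tscale (c k) (us k) | k <- enum 'I_N]) -> forall k, c k = 0.
Proof.
(* The component of length ms k of the combination is c k *: us k. *)
move=> ms_inj hom notI c Ic k; case: (eqVneq (c k) 0) => // ck; case: (notI k).
apply: (inI_coef_scale (c := (c k)^-1)) (inI_comp (ms k) Ic) => x.
rewrite coef_comp coef_flatten big_map big_enum /=.
case: (eqVneq (size x) (ms k)) => [xk | xk]; last first.
  by rewrite (coef_homogeneous (hom k)) ?mulr0.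
rewrite (bigD1 k) //= big1 ?addr0 ?coef_tscale ?mulKf // => j jk.
by rewrite coef_tscale (coef_homogeneous (hom j)) ?mulr0 // xk (inj_eq ms_inj) eq_sym.
Qed.

Lemma Delta_finite_bounded (F : fieldType) n (p : 'I_n -> 'I_n -> F) L :
  (forall w, lyndon w -> standard p w -> (size w <= L)%N) -> Delta_finite p.
Proof.
move=> bounded.
pose S := [seq [ffun i => (f i : nat)%:Z]
            | f : {ffun 'I_n -> 'I_L.+1} <- enum {ffun 'I_n -> 'I_L.+1}].
have degS w : lyndon w -> standard p w -> [ffun i => (wdeg w i)%:Z] \in S.
  move=> lw sw; apply/mapP; exists [ffun i => inord (wdeg w i)]; rewrite ?mem_enum //.
  apply/ffunP => i; rewrite !ffunE inordK // ltnS.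
  exact: leq_trans (count_size _ _) (bounded w lw sw).
exists (S ++ [seq [ffun i => - d i] | d : {ffun 'I_n -> int} <- S]).
move=> d [[w [lw sw ->]] | [w [lw sw e]]]; rewrite mem_cat; first by rewrite degS.
apply/orP; right; apply/mapP; exists [ffun i => (wdeg w i)%:Z]; first exact: degS.
by apply/ffunP => i; rewrite -e !ffunE opprK.
Qed.

Lemma long_lyndon_standard (F : fieldType) n (p : 'I_n -> 'I_n -> F) :
  ~ Delta_finite p -> forall L, exists w, [/\ lyndon w, standard p w & (L < size w)%N].
Proof.
move=> infinite L; apply: NNPP => none; apply/infinite/(Delta_finite_bounded (L := L)).
by move=> w lw sw; rewrite leqNgt; apply/negP => Lw; apply: none; exists w.
Qed.

Lemma exists_family_injective (A : Type) (P : A -> nat -> Prop) :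
  (forall L, exists a m, (L < m)%N /\ P a m) ->
  forall N, exists (f : 'I_N -> A) (g : 'I_N -> nat),
    injective g /\ forall k, P (f k) (g k).
Proof.
move=> unbounded; elim=> [|N [f [g [g_inj fgP]]]].
  by have [a _] := unbounded 0; exists (fun=> a), (fun=> 0); split=> [[]|[]].
have [a [m [gm Pam]]] := unbounded (\max_(k < N) g k)%N.
have g_lt k : (g k < m)%N by apply: leq_ltn_trans (leq_bigmax k) gm.
exists (fun k => if unlift ord_max k is Some k' then f k' else a).
exists (fun k => if unlift ord_max k is Some k' then g k' else m).
split=> [i j | k]; last by case: unliftP.
case: unliftP => [i' ->|->]; case: unliftP => [j' ->|->] //.
- by move/g_inj ->.
- by move=> gi; have := g_lt i'; rewrite gi ltnn.
- by move=> gj; have := g_lt j'; rewrite -gj ltnn.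
Qed.

Section Brackets.
Variables (F : fieldType) (n : nat) (p : 'I_n -> 'I_n -> F).
Variable ev : btree n -> tens F n.
Hypothesis ev_leaf : forall i, ev (BLeaf i) = tword F [:: i].
Hypothesis ev_node : forall a b, exists c1 c2, c1 != 0 /\
  ev (BNode a b) = tsub (tscale c1 (tmul (ev a) (ev b))) (tscale c2 (tmul (ev b) (ev a))).

Lemma inLie_ev t : inLie p ev (ev t).
Proof.
exists [:: (1, t)]; apply: (inI_coef_scale (c := 0)) (inI_nil p) => x.
by rewrite coef_tsub /lincomb /= cats0 coef_tscale mul1r subrr mul0r.
Qed.

Lemma suffix_minimal_leading_bracket w :
  suffix_minimal w -> exists t, leading_word (ev t) w.
Proof.
have [k] := ubnP (size w); elim: k w => // k IH w; rewrite ltnS => wk wmin.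
have [w1 | w2] := leqP (size w) 1.
  case: w wmin w1 {wk} => [[/eqP] // | i [|//]] _ _.
  by exists (BLeaf i); rewrite ev_leaf; apply: leading_word_tword.
have [u [v [wuv umin vmin]]] := suffix_minimal_factor wmin w2.
have [tu lu] : exists tu, leading_word (ev tu) u.
  by apply: IH umin; apply: leq_trans wk; rewrite wuv size_lt_catr //; case: vmin.
have [tv lv] : exists tv, leading_word (ev tv) v.
  by apply: IH vmin; apply: leq_trans wk; rewrite wuv size_lt_catl //; case: umin.
exists (BNode tu tv); have [c1 [c2 [c10 ->]]] := ev_node tu tv.
rewrite wuv; apply: leading_word_bracket => //; rewrite -wuv.
by apply: suffix_minimal_lt_rot; [| case: umin | case: vmin |].
Qed.

Lemma long_lie_element : ~ Delta_finite p ->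
  forall L, exists u m, (L < m)%N /\ [/\ inLie p ev u, homogeneous m u & ~ inI p u].
Proof.
move=> infinite L; have [w [lw sw Lw]] := long_lyndon_standard infinite L.
have [t lt] := suffix_minimal_leading_bracket (lyndon_suffix_minimal lw).
exists (ev t), (size w); split=> //; split; first exact: inLie_ev.
  exact: leading_word_homogeneous lt.
exact: leading_word_notinI lt sw.
Qed.

Lemma lie_infinite_dim_brackets : ~ Delta_finite p -> lie_infinite_dim p ev.
Proof.
move=> infinite N.
have [us [ms [ms_inj elts]]] := exists_family_injective (long_lie_element infinite) N.
exists us; split=> [k | ]; first by case: (elts k).
by apply: homogeneous_free ms_inj _ _ => k; case: (elts k).
Qed.

End Brackets.

Lemma pdeg_neq0 (F : fieldType) n (p : 'I_n -> 'I_n -> F) d e :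
  (forall i j, p i j != 0) -> pdeg p d e != 0.
Proof.
by move=> p0; apply/prodf_neq0 => i _; apply/prodf_neq0 => j _; apply: expf_neq0.
Qed.

Theorem theorem6p4 (F : fieldType) (n : nat) (p : 'I_n -> 'I_n -> F) :
  [pchar F] =i pred0 ->
  (forall i j, p i j != 0) ->
  ~ Delta_finite p ->
  lie_infinite_dim p (bevalL p) /\ lie_infinite_dim p (bevalR p).
Proof.
move=> _ p0 infinite; split; apply: lie_infinite_dim_brackets infinite => // a b.
- by exists (pdeg p (bdeg b) (bdeg a)), (pdeg p (bdeg a) (bdeg b)); rewrite pdeg_neq0.
- by exists (pdeg p (bdeg a) (bdeg b)), (pdeg p (bdeg b) (bdeg a)); rewrite pdeg_neq0.
Qed.
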